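(* Let $m>0$, $h\ge0$ and $\theta>0$, and let $g(u)=\bar\Psi_{m+h}\big(\theta\,\bar\Psi_m^{-1}(u)\big)$ for $u\in(0,1)$. If $\theta\le1$, then $g$ is concave on $(0,1)$; if $\theta>1$ and $h=0$, then $g$ is convex on $(0,1)$.
   Context: $\Psi_k$ denotes the CDF of the (central) chi-squared distribution with $k$ degrees of freedom, $\bar\Psi_k=1-\Psi_k$ its survival function, and $\bar\Psi_k^{-1}:(0,1)\to(0,\infty)$ the inverse of $\bar\Psi_k$. *)

From HB Require Import structures.
From mathcomp Require Import all_boot all_order all_algebra.
From mathcomp Require Import all_classical all_reals all_analysis.
Set Implicit Arguments. Unset Strict Implicit. Unset Printing Implicit Defensive.
Import Order.TTheory GRing.Theory Num.Theory.
Local Open Scope classical_set_scope.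
Local Open Scope ring_scope.

Section Chi2.
Variable R : realType.

Definition chi2_kernel (k t : R) : R := powR t (k / 2 - 1) * expR (- t / 2).

(* survival function  bar Psi_k(x) = P(chi^2_k > x)
   = (int_{max x 0}^oo kernel) / (int_0^oo kernel); the normalising
   integral equals 2^(k/2) Gamma(k/2). *)
Definition chi2_sf (k x : R) : R :=
  fine (\int[@lebesgue_measure R]_(t in `](Num.max x 0), +oo[) (chi2_kernel k t)%:E)
  / fine (\int[@lebesgue_measure R]_(t in `]0, +oo[) (chi2_kernel k t)%:E).

Definition chi2_cdf (k x : R) : R := 1 - chi2_sf k x.

(* inverse of the survival function on (0,1): the (unique) x > 0 with
   bar Psi_k(x) = u *)
Definition chi2_sf_inv (k u : R) : R :=
  xget 0 [set x : R | 0 < x /\ chi2_sf k x = u].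

Definition concave_on_01 (g : R -> R) : Prop :=
  forall x y t : R, 0 < x < 1 -> 0 < y < 1 -> 0 <= t <= 1 ->
    t * g x + (1 - t) * g y <= g (t * x + (1 - t) * y).

Definition convex_on_01 (g : R -> R) : Prop :=
  forall x y t : R, 0 < x < 1 -> 0 < y < 1 -> 0 <= t <= 1 ->
    g (t * x + (1 - t) * y) <= t * g x + (1 - t) * g y.

End Chi2.

(* Write xi for the inverse of the survival function of chi^2_m and
   P x = \bar Psi_{m+h}(theta x), so that g = P \o xi with xi decreasing.  On
   (0, +oo) both \bar Psi_m and P are differentiable, with derivatives
   -K_m / Z_m and -theta K_{m+h}(theta .) / Z_{m+h}, where
   K_k t = t^(k/2-1) e^(-t/2) and Z_k is its integral.  The Cauchy mean value
   theorem on [xi u2, xi u1] therefore writes each chord slope of g as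
   r c = theta Z_m K_{m+h}(theta c) / (Z_{m+h} K_m c), a positive multiple of
   c^(h/2) e^((1-theta) c/2), at some c in (xi u2, xi u1).  These points move
   left as the chord moves right, so the slopes of g decrease (concavity) when
   r is nondecreasing, i.e. theta <= 1, and increase (convexity) when r is
   nonincreasing, i.e. theta > 1 and h = 0.  The analytic input is the
   integrability of K_k on (0, +oo), which makes \bar Psi_k differentiable
   there and onto (0, 1). *)

From HB Require Import structures.
From mathcomp Require Import all_boot all_order all_algebra.
From mathcomp Require Import all_classical all_reals all_analysis.
From mathcomp Require Import measurable_realfun exponential_distribution.
From mathcomp Require Import lra ring.
Import Order.TTheory GRing.Theory Num.Theory.
Import numFieldNormedType.Exports.
Set Implicit Arguments.
Unset Strict Implicit.
Unset Printing Implicit Defensive.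
Local Open Scope ring_scope.
Local Open Scope classical_set_scope.

Section real_analysis.
Context {R : realType}.
Notation mu := (@lebesgue_measure R).

Lemma is_derive_comp_scale (f : R -> R) (c x df : R) :
  is_derive (c * x) 1 f df -> is_derive x 1 (fun y => f (c * y)) (c * df).
Proof.
move=> [fd fv].
have hd : derivable (fun y => c * y) x 1 by apply: ex_derive; apply: is_deriveZ.
split.
  apply/derivable1_diffP; apply: differentiable_comp; exact/derivable1_diffP.
rewrite -derive1E (derive1_comp hd fd) derive1E fv derive1E.
have [_ ->] := @is_deriveZ R R R id c x 1 1 _.
by rewrite mulrC; congr (_ * _); exact: mulr1.
Qed.

Lemma MVT_pos (f df : R -> R) (a b : R) : 0 < a -> a < b ->
  (forall x : R, 0 < x -> is_derive x 1 f (df x)) ->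
  exists2 c, c \in `]a, b[%R & f b - f a = df c * (b - a).
Proof.
move=> a0 ab fD; apply: MVT => //.
- by move=> x; rewrite in_itv /= => /andP[ax _]; apply: fD; apply: lt_trans ax.
- apply: derivable_within_continuous => x; rewrite in_itv /= => /andP[ax _].
  by case: (fD x (lt_le_trans a0 ax)).
Qed.

Lemma cauchy_MVT_pos (f g df dg : R -> R) (a b : R) : 0 < a -> a < b ->
  (forall x : R, 0 < x -> is_derive x 1 f (df x)) ->
  (forall x : R, 0 < x -> is_derive x 1 g (dg x)) ->
  exists2 c, a < c < b & (f b - f a) * dg c = (g b - g a) * df c.
Proof.
move=> a0 ab fD gD.
pose phi := (g b - g a) *: f - (f b - f a) *: g.
have phiD (x : R) : 0 < x -> is_derive x 1 phi ((g b - g a) * df x - (f b - f a) * dg x).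
  by move=> x0; apply: is_deriveB; apply: is_deriveZ; [exact: fD | exact: gD].
have [c /[!in_itv] /= cab phic] := MVT_pos a0 ab phiD.
exists c => //.
have : phi b - phi a = 0.
  change ((g b - g a) * f b - (f b - f a) * g b
    - ((g b - g a) * f a - (f b - f a) * g a) = 0); ring.
by rewrite phic => /eqP; rewrite mulf_eq0 !subr_eq0 (gt_eqF ab) orbF => /eqP ->.
Qed.

Lemma IVT_pos (f : R -> R) (p q u : R) : 0 < p -> 0 < q ->
  (forall x : R, 0 < x -> derivable f x 1) -> f q <= u <= f p ->
  exists2 c, 0 < c & f c = u.
Proof.
move=> p0 q0 fD /andP[fqu ufp].
have ivt a b : 0 < a -> a <= b -> Num.min (f a) (f b) <= u <= Num.max (f a) (f b) ->
    exists2 c, 0 < c & f c = u.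
  move=> a0 ab hu.
  have cf : {within `[a, b], continuous f}.
    apply: derivable_within_continuous => x; rewrite in_itv /= => /andP[ax _].
    exact: fD (lt_le_trans a0 ax).
  have [c /[!in_itv] /= /andP[ac _] fc] := IVT ab cf hu.
  by exists c => //; apply: lt_le_trans ac.
have [pq|qp] := leP p q.
  by apply: (ivt p q) => //; rewrite ge_min le_max fqu ufp !orbT.
by apply: (ivt q p) => //; [exact: ltW | rewrite ge_min le_max fqu ufp !orbT].
Qed.

Lemma FTC2_pos (f F : R -> R) (a b : R) : 0 < a -> a < b ->
  (forall x : R, 0 < x -> is_derive x 1 F (f x)) ->
  (forall x : R, 0 < x -> {for x, continuous f}) ->
  (\int[mu]_(x in `[a, b]) (f x)%:E = (F b)%:E - (F a)%:E)%E.
Proof.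
move=> a0 ab FD fC.
have FC (x : R) : 0 < x -> {for x, continuous F}.
  move=> x0; apply: differentiable_continuous; apply/derivable1_diffP.
  by case: (FD x x0).
apply: continuous_FTC2 => //.
- apply: continuous_in_subspaceT => x; rewrite inE /= in_itv /= => /andP[ax _].
  by apply: fC; apply: lt_le_trans ax.
- split.
  + by move=> x /[!in_itv] /= /andP[ax _]; case: (FD x (lt_trans a0 ax)).
  + by apply: cvg_at_right_filter; apply: FC.
  + by apply: cvg_at_left_filter; apply: FC; apply: lt_trans ab.
- move=> x /[!in_itv] /= /andP[ax _].
  by have [_ <-] := FD x (lt_trans a0 ax); rewrite derive1E.
Qed.

Lemma integral_powR_itvcc1_le (a e : R) : -1 < a -> 0 < e -> e < 1 ->
  (\int[mu]_(t in `[e, 1%R]) (powR t a)%:E <= ((a + 1)^-1)%:E)%E.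
Proof.
move=> a1 e0 e1; have a10 : 0 < a + 1 by rewrite -ltrBlDr sub0r.
have powD (x : R) : 0 < x ->
    is_derive x 1 (fun t => (a + 1)^-1 * powR t (a + 1)) (powR x a).
  move=> x0; apply: is_derive_eq (is_deriveZ _ (is_derive1_powR (a + 1) x0)) _.
  by rewrite /GRing.scale /= mulrA mulVf ?mul1r ?addrK // gt_eqF.
have powC (x : R) : 0 < x -> {for x, continuous (fun t => powR t a)}.
  move=> x0; apply: differentiable_continuous; apply/derivable1_diffP.
  by apply: derivable_powR; rewrite in_itv /= andbT.
rewrite (FTC2_pos e0 e1 powD powC) powR1 -EFinD lee_fin mulr1 lerBlDr lerDl.
by rewrite mulr_ge0 ?powR_ge0 // invr_ge0 ltW.
Qed.

Lemma integral_powR_itvoc01 (a : R) : -1 < a ->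
  (\int[mu]_(t in `]0%R, 1%R]) (powR t a)%:E <= ((a + 1)^-1)%:E)%E.
Proof.
move=> a1; pose F (n : nat) : set R := `[(n.+2%:R)^-1, 1].
have nndF : nondecreasing_seq F.
  apply/nondecreasing_seqP => n; rewrite subsetEset; apply: subset_itvr.
  by rewrite bnd_simp lef_pV2 ?posrE // ler_nat.
have mF i : measurable (F i) by exact: measurable_itv.
have mf i : measurable_fun (F i) (fun t => (powR t a)%:E).
  by apply/measurable_EFinP; apply: measurable_funTS; apply: measurable_powR.
have f0 i x : F i x -> (0 <= (powR x a)%:E)%E by rewrite lee_fin powR_ge0.
have := ge0_nondecreasing_set_cvg_integral (mu := mu) nndF mF mf f0.
have -> : \bigcup_n F n = `]0, 1].
  apply/seteqP; split => x.
    move=> [n _]; rewrite /F /= !in_itv /= => /andP[nx ->].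
    by rewrite andbT (lt_le_trans _ nx).
  rewrite /= in_itv /= => /andP[x0 x1].
  have [n xn] : exists n : nat, x^-1 < n.+2%:R.
    exists (Num.truncn x^-1); apply: lt_trans (truncnS_gt _) _.
    by rewrite ltr_nat.
  exists n => //; rewrite /F /= in_itv /= x1 andbT.
  by rewrite -(invrK x) lef_pV2 ?posrE ?invr_gt0 // ltW.
move=> cv; rewrite -(cvg_lim _ cv) //; apply: lime_le.
  by apply/cvg_ex; eexists; exact: cv.
apply: nearW => n.
by apply: integral_powR_itvcc1_le; rewrite ?invr_gt0 ?invf_lt1 ?ltr1n.
Qed.

Lemma integral_exhaustion_gt d (T : measurableType d) (nu : {measure set T -> \bar R})
    (f : T -> \bar R) (F : (set T)^nat) (v : \bar R) :
  nondecreasing_seq F -> (forall n, measurable (F n)) ->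
  (forall n, measurable_fun (F n) f) -> (forall n x, F n x -> (0 <= f x)%E) ->
  (v < \int[nu]_(x in \bigcup_n F n) f x)%E ->
  exists n, (v < \int[nu]_(x in F n) f x)%E.
Proof.
move=> nndF mF mf f0 vlt.
have cv := ge0_nondecreasing_set_cvg_integral (mu := nu) nndF mF mf f0.
have nd : nondecreasing_seq (fun n => \int[nu]_(x in F n) f x)%E.
  exact: ge0_nondecreasing_set_nondecreasing_integral.
move: vlt; rewrite -(cvg_lim _ cv) // (cvg_lim _ (ereal_nondecreasing_cvgn nd)) //.
by move=> /ereal_sup_gt [_ [n _ <-]]; exists n.
Qed.

Lemma concave_on_01_of_slopes (g : R -> R) :
  (forall x w y : R, 0 < x -> x < w -> w < y -> y < 1 ->
     (g y - g w) * (w - x) <= (g w - g x) * (y - w)) -> concave_on_01 g.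
Proof.
move=> H x y t /andP[x0 x1] /andP[y0 y1] /andP[t0 t1].
have [->|tn0] := eqVneq t 0; first by rewrite !mul0r !subr0 !add0r !mul1r.
have [->|tn1] := eqVneq t 1; first by rewrite subrr !mul0r !addr0 !mul1r.
set w := t * x + (1 - t) * y.
have t0' : 0 < t by rewrite lt_neqAle eq_sym tn0.
have t1' : t < 1 by rewrite lt_neqAle tn1.
case: (ltgtP x y) => xy.
- have xw : x < w by rewrite /w; nra.
  have wy : w < y by rewrite /w; nra.
  by have := H x w y x0 xw wy y1; rewrite /w; nra.
- have yw : y < w by rewrite /w; nra.
  have wx : w < x by rewrite /w; nra.
  by have := H y w x y0 yw wx x1; rewrite /w; nra.
- by rewrite /w xy -!mulrDl subrKC !mul1r.
Qed.

Lemma concave_on_01_of_mean_values (g r xi : R -> R) :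
  (forall u : R, 0 < u < 1 -> 0 < xi u) ->
  (forall u1 u2 : R, 0 < u1 -> u1 < u2 -> u2 < 1 ->
     exists2 c, xi u2 < c < xi u1 & g u2 - g u1 = (u2 - u1) * r c) ->
  (forall c2 c1 : R, 0 < c2 -> c2 < c1 -> r c2 <= r c1) ->
  concave_on_01 g.
Proof.
move=> xi0 gmv rmono; apply: concave_on_01_of_slopes => x w y x0 xw wy y1.
have [c1 /andP[wc1 c1x] ->] := gmv x w x0 xw (lt_trans wy y1).
have [c2 /andP[yc2 c2w] ->] := gmv w y (lt_trans x0 xw) wy y1.
have c20 : 0 < c2.
  by apply: lt_trans yc2; apply: xi0; rewrite y1 andbT (lt_trans x0) ?(lt_trans xw).
have := rmono c2 c1 c20 (lt_trans c2w wc1); rewrite -subr_ge0 => r21.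
have : 0 <= (y - w) * (w - x) by rewrite mulr_ge0 // subr_ge0 ltW.
by move/mulr_ge0/(_ r21); lra.
Qed.

Lemma convex_on_01_of_mean_values (g r xi : R -> R) :
  (forall u : R, 0 < u < 1 -> 0 < xi u) ->
  (forall u1 u2 : R, 0 < u1 -> u1 < u2 -> u2 < 1 ->
     exists2 c, xi u2 < c < xi u1 & g u2 - g u1 = (u2 - u1) * r c) ->
  (forall c2 c1 : R, 0 < c2 -> c2 < c1 -> r c1 <= r c2) ->
  convex_on_01 g.
Proof.
move=> xi0 gmv rmono.
have : concave_on_01 (fun u => - g u).
  apply: (concave_on_01_of_mean_values (r := fun c => - r c) xi0).
    move=> u1 u2 u10 u12 u21; have [c cxi gc] := gmv u1 u2 u10 u12 u21.
    by exists c => //; rewrite mulrN -gc; ring.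
  by move=> c2 c1 c20 c21; rewrite lerN2; apply: rmono.
move=> gN x y t x01 y01 t01; have := gN x y t x01 y01 t01; lra.
Qed.

End real_analysis.

Section chi2_kernel.
Context {R : realType}.
Notation mu := (@lebesgue_measure R).
Implicit Types k t : R.

Lemma chi2_kernel_gt0 k t : 0 < t -> 0 < chi2_kernel k t.
Proof. by move=> t0; rewrite /chi2_kernel mulr_gt0 ?powR_gt0 ?expR_gt0. Qed.

Lemma chi2_kernel_ge0 k t : 0 <= chi2_kernel k t.
Proof. by rewrite /chi2_kernel mulr_ge0 ?powR_ge0 ?expR_ge0. Qed.

Lemma chi2_kernelE k t : 0 < t ->
  chi2_kernel k t = expR ((k / 2 - 1) * ln t - t / 2).
Proof. by move=> t0; rewrite /chi2_kernel /powR gt_eqF // -expRD mulNr. Qed.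

Lemma measurable_chi2_kernel k : measurable_fun setT (chi2_kernel k).
Proof.
apply: measurable_funM; first exact: measurable_powR.
apply: measurableT_comp; first exact: measurable_expR.
by apply: measurable_funM => //; apply: measurableT_comp.
Qed.

Lemma continuous_chi2_kernel k t : 0 < t -> {for t, continuous (chi2_kernel k)}.
Proof.
move=> t0; apply: continuousM.
  apply: differentiable_continuous; apply/derivable1_diffP.
  by apply: derivable_powR; rewrite in_itv /= andbT.
apply: continuous_comp; last exact: continuous_expR.
by apply: continuousM; [apply: continuousN; exact: cvg_id | exact: cvg_cst].
Qed.

Lemma chi2_kernel_le_expR k :
  exists C, forall t, 1 < t -> chi2_kernel k t <= expR (C - t / 4).
Proof.
set a := k / 2 - 1; set b := `|a| + 1.
exists (b * ln (4 * b)) => t t1; have t0 : 0 < t by apply: lt_trans t1.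
rewrite chi2_kernelE // ler_expR -/a.
have b0 : 0 < b by rewrite /b ltr_wpDl.
have b4 : 0 < 4 * b by rewrite mulr_gt0.
have alnt : a * ln t <= b * ln t.
  apply: ler_wpM2r; first by rewrite ln_ge0 // ltW.
  by rewrite /b (le_trans (ler_norm a)) // lerDl.
have lnt : b * ln t = b * ln (t / (4 * b)) + b * ln (4 * b).
  by rewrite -mulrDr ln_div ?posrE // subrK.
have lnt4 : b * ln (t / (4 * b)) <= t / 4.
  have -> : t / 4 = b * (t / (4 * b)) by field; rewrite gt_eqF.
  by apply: ler_wpM2l; rewrite ltW // ln_sublinear // divr_gt0.
lra.
Qed.

Lemma chi2_kernel_integral_itvoc01_lty k : 0 < k ->
  (\int[mu]_(t in `]0%R, 1%R]) (chi2_kernel k t)%:E < +oo)%E.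
Proof.
move=> k0.
have a1 : -1 < k / 2 - 1 by rewrite ltrBrDr addrC subrr divr_gt0.
apply: (le_lt_trans _ (ltry ((k / 2 - 1 + 1)^-1))).
apply: le_trans (integral_powR_itvoc01 a1).
apply: ge0_le_integral => //.
- by move=> t _; rewrite lee_fin chi2_kernel_ge0.
- by apply/measurable_EFinP; apply: measurable_funTS; apply: measurable_chi2_kernel.
- by apply/measurable_EFinP; apply: measurable_funTS; apply: measurable_powR.
move=> t; rewrite /= in_itv /= => /andP[t0 _]; rewrite lee_fin /chi2_kernel.
by rewrite ler_piMr ?powR_ge0 // expR_le1 mulNr oppr_le0 divr_ge0 // ltW.
Qed.

Lemma chi2_kernel_integral_itvoo1y_lty k :
  (\int[mu]_(t in `]1%R, +oo[) (chi2_kernel k t)%:E < +oo)%E.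
Proof.
have [C kC] := chi2_kernel_le_expR k.
have q0 : (0 : R) < 4^-1 by rewrite invr_gt0.
pose M := 4 * expR C; have M0 : 0 <= M by rewrite mulr_ge0 ?expR_ge0.
have mexp : measurable_fun setT (exponential_pdf (4^-1 : R)).
  exact: measurable_exponential_pdf.
apply: (@le_lt_trans _ _ (\int[mu]_(t in `]1%R, +oo[)
    (M%:E * (exponential_pdf 4^-1 t)%:E))%E); last first.
  rewrite ge0_integralZl_EFin //; last 2 first.
  - by move=> t _; rewrite lee_fin exponential_pdf_ge0.
  - exact/measurable_EFinP/measurable_funTS.
  apply: (@le_lt_trans _ _ M%:E); last exact: ltry.
  rewrite -[leRHS]mule1 lee_wpmul2l ?lee_fin //.
  rewrite -(integral_exponential_pdf q0); apply: ge0_subset_integral => //.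
  - exact/measurable_EFinP.
  - by move=> t _; rewrite lee_fin exponential_pdf_ge0.
apply: ge0_le_integral => //.
- by move=> t _; rewrite lee_fin chi2_kernel_ge0.
- by apply/measurable_EFinP; apply: measurable_funTS; apply: measurable_chi2_kernel.
- by apply/measurable_EFinP; apply: measurable_funTS; apply: measurable_funM.
move=> t; rewrite /= in_itv /= => /andP[t1 _].
rewrite -EFinM lee_fin exponential_pdfE; last by rewrite ltW // (lt_trans _ t1).
have -> : M * (4^-1 * expR (- 4^-1 * t)) = expR (C - t / 4).
  rewrite /M mulrCA mulrA [4^-1 * (4 * _)]mulrA mulVf // mul1r -expRD.
  by rewrite mulNr mulrC.
exact: kC.
Qed.

Lemma integrable_chi2_kernel k : 0 < k ->
  mu.-integrable `]0%R, +oo[ (EFin \o chi2_kernel k).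
Proof.
move=> k0; apply/integrableP; split.
  by apply/measurable_EFinP; apply: measurable_funTS; apply: measurable_chi2_kernel.
have -> : (fun t => `|(EFin \o chi2_kernel k) t|%E) = (fun t => (chi2_kernel k t)%:E).
  by apply: funext => t /=; rewrite ger0_norm ?chi2_kernel_ge0.
rewrite (@itv_bndbnd_setU _ _ _ (BRight 1%R)) ?bnd_simp //.
rewrite ge0_integral_setU //.
- by rewrite lte_add_pinfty ?chi2_kernel_integral_itvoc01_lty //
    ?chi2_kernel_integral_itvoo1y_lty.
- by apply/measurable_EFinP; apply: measurable_funTS; apply: measurable_chi2_kernel.
- by move=> t _; rewrite lee_fin chi2_kernel_ge0.
- apply/disj_setPS => y [/=]; rewrite 2!in_itv/= => /andP[_ y1] /andP[].
  by rewrite ltNge y1.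
Qed.

Lemma chi2_kernel_integralE k (A : set R) : 0 < k -> measurable A ->
  A `<=` `]0%R, +oo[ ->
  (\int[mu]_(t in A) (chi2_kernel k t)%:E)%E = (\int[mu]_(t in A) chi2_kernel k t)%:E.
Proof.
move=> k0 mA sA; rewrite /Rintegral fineK //; apply: integrable_fin_num => //.
exact: integrableS (integrable_chi2_kernel k0).
Qed.

End chi2_kernel.

Section chi2_sf.
Context {R : realType}.
Notation mu := (@lebesgue_measure R).
Implicit Types k u x y : R.

Definition chi2_norm k : R := \int[mu]_(t in `]0%R, +oo[) chi2_kernel k t.
Definition chi2_cumul k y : R := \int[mu]_(t in `]0%R, y]) chi2_kernel k t.

Lemma chi2_sfE k y : 0 < k -> 0 < y ->
  chi2_sf k y = (chi2_norm k - chi2_cumul k y) / chi2_norm k.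
Proof.
move=> k0 y0; rewrite /chi2_sf max_l ?ltW //; congr (_ / _).
rewrite (@Rintegral_itvB R _ (BRight 0) (BInfty R false) y) //.
- exact: integrable_chi2_kernel.
- by rewrite bnd_simp ltW.
Qed.

Lemma chi2_cumul_le_norm k y : 0 < k -> 0 < y -> chi2_cumul k y <= chi2_norm k.
Proof.
move=> k0 y0; rewrite -subr_ge0 /chi2_norm /chi2_cumul.
rewrite (@Rintegral_itvB R _ (BRight 0) (BInfty R false) y) //.
- by apply: Rintegral_ge0 => t _; apply: chi2_kernel_ge0.
- exact: integrable_chi2_kernel.
- by rewrite bnd_simp ltW.
Qed.

Lemma is_derive_chi2_cumul k x : 0 < k -> 0 < x ->
  is_derive x 1 (chi2_cumul k) (chi2_kernel k x).
Proof.
move=> k0 x0.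
have x1 : x < x + 1 by rewrite ltrDl.
have int01 : mu.-integrable [set` Interval (BRight 0) (BRight (x + 1))]
    (EFin \o chi2_kernel k).
  apply: integrableS (integrable_chi2_kernel k0) => //.
  by apply: subset_itvl; rewrite bnd_simp.
have ax : (BRight (0 : R) < BRight x)%O by rewrite bnd_simp.
have [cD <-] := continuous_FTC1 x1 int01 ax (continuous_chi2_kernel (k := k) x0).
by split; rewrite // derive1E.
Qed.

Lemma chi2_norm_gt0 k : 0 < k -> 0 < chi2_norm k.
Proof.
move=> k0; have l12 : (1 : R) < 2 by rewrite ltr1n.
have [c /[!in_itv] /= /andP[c1 _] cumulE] :=
  MVT_pos ltr01 l12 (fun x => @is_derive_chi2_cumul k x k0).
have cumul1 : 0 <= chi2_cumul k 1.
  by apply: Rintegral_ge0 => t _; apply: chi2_kernel_ge0.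
have : chi2_cumul k 1 < chi2_cumul k 2.
  by rewrite -subr_gt0 cumulE mulr_gt0 ?subr_gt0 ?ltr1n ?chi2_kernel_gt0 ?(lt_trans _ c1).
by move/(le_lt_trans cumul1)/lt_le_trans; apply; apply: chi2_cumul_le_norm.
Qed.

Lemma is_derive_chi2_sf k x : 0 < k -> 0 < x ->
  is_derive x 1 (chi2_sf k) (- chi2_kernel k x / chi2_norm k).
Proof.
move=> k0 x0.
pose g := (chi2_norm k)^-1 *: (cst (chi2_norm k) - chi2_cumul k).
apply: (@near_eq_is_derive _ _ _ g).
  near=> y; rewrite chi2_sfE ?(mulrC (_ - _)) //.
  by near: y; exact: lt_nbhsr.
apply: is_derive_eq.
  by apply: is_deriveZ; apply: is_deriveB; exact: is_derive_chi2_cumul.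
by rewrite sub0r /GRing.scale /= mulrC mulNr.
Unshelve. all: by end_near.
Qed.

Lemma ltr_chi2_sf k a b : 0 < k -> 0 < a -> a < b -> chi2_sf k b < chi2_sf k a.
Proof.
move=> k0 a0 ab; rewrite -subr_lt0.
have [c /[!in_itv] /= /andP[ac _] ->] :=
  MVT_pos a0 ab (fun x => @is_derive_chi2_sf k x k0).
rewrite nmulr_rlt0 ?subr_gt0 // mulNr oppr_lt0 divr_gt0 ?chi2_norm_gt0 //.
by rewrite chi2_kernel_gt0 // (lt_trans a0).
Qed.

Lemma exists_chi2_sf_ge k u : 0 < k -> u < 1 -> exists2 a, 0 < a & u <= chi2_sf k a.
Proof.
move=> k0 u1; have Z0 := chi2_norm_gt0 k0.
pose F n : set R := `](n.+1%:R)^-1, +oo[.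
have nndF : nondecreasing_seq F.
  apply/nondecreasing_seqP => n; rewrite subsetEset; apply: subset_itvr.
  by rewrite bnd_simp lef_pV2 ?posrE // ler_nat.
have mF n : measurable (F n) by exact: measurable_itv.
have sF n : F n `<=` `]0%R, +oo[.
  by apply: subset_itvr; rewrite bnd_simp invr_ge0.
have UF : \bigcup_n F n = `]0%R, +oo[.
  apply/seteqP; split=> [x [n _]|x]; first exact: sF.
  rewrite /= in_itv /= andbT => x0.
  exists (Num.truncn x^-1) => //; rewrite /F /= in_itv /= andbT.
  by rewrite -[X in _ < X]invrK ltf_pV2 ?posrE ?invr_gt0 // truncnS_gt.
have [n] : exists n, ((u * chi2_norm k)%:E < \int[mu]_(t in F n) (chi2_kernel k t)%:E)%E.
  apply: integral_exhaustion_gt => //.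
  - by move=> n; apply/measurable_EFinP; apply: measurable_funTS; apply: measurable_chi2_kernel.
  - by move=> n t _; rewrite lee_fin chi2_kernel_ge0.
  by rewrite UF chi2_kernel_integralE // lte_fin gtr_pMl.
rewrite chi2_kernel_integralE // lte_fin => uZ.
exists (n.+1%:R)^-1; first by rewrite invr_gt0.
rewrite /chi2_sf max_l ?invr_ge0 // ler_pdivlMr //; exact: ltW.
Qed.

Lemma exists_chi2_sf_le k u : 0 < k -> 0 < u -> exists2 b, 0 < b & chi2_sf k b <= u.
Proof.
move=> k0 u0; have Z0 := chi2_norm_gt0 k0.
pose F n : set R := `]0%R, n.+1%:R].
have nndF : nondecreasing_seq F.
  apply/nondecreasing_seqP => n; rewrite subsetEset; apply: subset_itvl.
  by rewrite bnd_simp ler_nat.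
have mF n : measurable (F n) by exact: measurable_itv.
have sF n : F n `<=` `]0%R, +oo[ by apply: subset_itvl.
have UF : \bigcup_n F n = `]0%R, +oo[.
  apply/seteqP; split=> [x [n _]|x]; first exact: sF.
  rewrite /= in_itv /= andbT => x0.
  by exists (Num.truncn x) => //; rewrite /F /= in_itv /= x0 ltW // truncnS_gt.
have [n] : exists n,
    (((1 - u) * chi2_norm k)%:E < \int[mu]_(t in F n) (chi2_kernel k t)%:E)%E.
  apply: integral_exhaustion_gt => //.
  - by move=> n; apply/measurable_EFinP; apply: measurable_funTS; apply: measurable_chi2_kernel.
  - by move=> n t _; rewrite lee_fin chi2_kernel_ge0.
  by rewrite UF chi2_kernel_integralE // lte_fin gtr_pMl // ltrBlDr ltrDl.
rewrite chi2_kernel_integralE // lte_fin => uZ.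
exists n.+1%:R => //; rewrite chi2_sfE // ler_pdivrMr //.
by move: uZ; rewrite /chi2_cumul; lra.
Qed.

Lemma chi2_sf_invP k u : 0 < k -> 0 < u < 1 ->
  0 < chi2_sf_inv k u /\ chi2_sf k (chi2_sf_inv k u) = u.
Proof.
move=> k0 /andP[u0 u1].
suff [c c0 cu] : exists2 c, 0 < c & chi2_sf k c = u.
  by apply: (@xgetPex _ 0 [set x | 0 < x /\ chi2_sf k x = u]); exists c.
have [a a0 ua] := exists_chi2_sf_ge k0 u1.
have [b b0 bu] := exists_chi2_sf_le k0 u0.
have sfD (x : R) : 0 < x -> derivable (chi2_sf k) x 1.
  by move=> x0; case: (is_derive_chi2_sf k0 x0).
by apply: (IVT_pos a0 b0 sfD); rewrite ua bu.
Qed.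

End chi2_sf.

Section chi2_slope.
Context {R : realType}.
Implicit Types m k th a b c u : R.

(* The ratio of the derivatives of [x |-> chi2_sf k (th * x)] and [chi2_sf m]. *)
Definition chi2_slope m k th c : R :=
  th * chi2_norm m / chi2_norm k * (chi2_kernel k (th * c) / chi2_kernel m c).

Lemma chi2_sf_cauchy m k th a b : 0 < m -> 0 < k -> 0 < th -> 0 < a -> a < b ->
  exists2 c, a < c < b & chi2_sf k (th * a) - chi2_sf k (th * b) =
    (chi2_sf m a - chi2_sf m b) * chi2_slope m k th c.
Proof.
move=> m0 k0 th0 a0 ab.
have PD (x : R) : 0 < x -> is_derive x 1 (fun y => chi2_sf k (th * y))
    (th * (- chi2_kernel k (th * x) / chi2_norm k)).
  by move=> x0; apply: is_derive_comp_scale; apply: is_derive_chi2_sf; rewrite ?mulr_gt0.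
have [c /andP[ac cb] e] :=
  cauchy_MVT_pos a0 ab PD (fun x => @is_derive_chi2_sf _ m x m0).
exists c; first by rewrite ac.
have c0 : 0 < c by rewrite (lt_trans a0).
have Km := chi2_kernel_gt0 m c0; have Kk := chi2_kernel_gt0 k (mulr_gt0 th0 c0).
have Zm := chi2_norm_gt0 m0; have Zk := chi2_norm_gt0 k0.
have slopeE : chi2_slope m k th c * (chi2_kernel m c / chi2_norm m) =
    th * (chi2_kernel k (th * c) / chi2_norm k).
  by rewrite /chi2_slope; field; rewrite !gt_eqF.
apply: (@mulIf _ (chi2_kernel m c / chi2_norm m)); first by rewrite gt_eqF ?divr_gt0.
rewrite /= -[RHS]mulrA slopeE.
transitivity ((chi2_sf k (th * b) - chi2_sf k (th * a)) *
  (- chi2_kernel m c / chi2_norm m)); first by ring.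
by rewrite e; ring.
Qed.

Lemma chi2_sf_inv_mean_value m k th u1 u2 :
  0 < m -> 0 < k -> 0 < th -> 0 < u1 -> u1 < u2 -> u2 < 1 ->
  exists2 c, chi2_sf_inv m u2 < c < chi2_sf_inv m u1 &
    chi2_sf k (th * chi2_sf_inv m u2) - chi2_sf k (th * chi2_sf_inv m u1) =
    (u2 - u1) * chi2_slope m k th c.
Proof.
move=> m0 k0 th0 u10 u12 u21.
have u1_01 : 0 < u1 < 1 by rewrite u10 (lt_trans u12).
have u2_01 : 0 < u2 < 1 by rewrite u21 (lt_trans u10).
have [x10 Qx1] := chi2_sf_invP m0 u1_01.
have [x20 Qx2] := chi2_sf_invP m0 u2_01.
have x21 : chi2_sf_inv m u2 < chi2_sf_inv m u1.
  case: ltgtP => // [x12|x12].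
  - by have := ltr_chi2_sf m0 x10 x12; rewrite Qx1 Qx2 ltNge ltW.
  - by move: u12; rewrite -Qx1 -Qx2 x12 ltxx.
have [c cx e] := chi2_sf_cauchy m0 k0 th0 x20 x21.
by exists c; rewrite // e Qx1 Qx2.
Qed.

Lemma chi2_kernel_ratioE m k th c : 0 < th -> 0 < c ->
  chi2_kernel k (th * c) / chi2_kernel m c =
  expR ((k / 2 - 1) * (ln th + ln c) - th * c / 2 - ((m / 2 - 1) * ln c - c / 2)).
Proof. by move=> th0 c0; rewrite !chi2_kernelE ?mulr_gt0 // -expRB lnM ?posrE. Qed.

Lemma chi2_slope_nondecreasing m h th c2 c1 : 0 < m -> 0 <= h -> 0 < th -> th <= 1 ->
  0 < c2 -> c2 < c1 -> chi2_slope m (m + h) th c2 <= chi2_slope m (m + h) th c1.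
Proof.
move=> m0 h0 th0 th1 c20 c21; have c10 : 0 < c1 by rewrite (lt_trans c20).
rewrite /chi2_slope ler_pM2l; last first.
  by rewrite mulr_gt0 ?invr_gt0 ?mulr_gt0 ?chi2_norm_gt0 ?ltr_wpDr.
rewrite !chi2_kernel_ratioE // ler_expR.
have lnc : ln c2 <= ln c1 by rewrite ler_ln ?posrE // ltW.
have : 0 <= h * (ln c1 - ln c2) by rewrite mulr_ge0 // subr_ge0.
have : 0 <= (1 - th) * (c1 - c2) by rewrite mulr_ge0 // subr_ge0 // ltW.
lra.
Qed.

Lemma chi2_slope_nonincreasing m th c2 c1 : 0 < m -> 1 < th ->
  0 < c2 -> c2 < c1 -> chi2_slope m m th c1 <= chi2_slope m m th c2.
Proof.
move=> m0 th1 c20 c21; have c10 : 0 < c1 by rewrite (lt_trans c20).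
have th0 : 0 < th by rewrite (lt_trans ltr01).
rewrite /chi2_slope ler_pM2l; last first.
  by rewrite mulr_gt0 ?invr_gt0 ?mulr_gt0 ?chi2_norm_gt0.
rewrite !chi2_kernel_ratioE // ler_expR.
have : 0 <= (th - 1) * (c1 - c2) by rewrite mulr_ge0 // subr_ge0 ltW.
lra.
Qed.

End chi2_slope.

Theorem mainTheorem6 (R : realType) (m h theta : R)
  (hm : 0 < m) (hh : 0 <= h) (htheta : 0 < theta) :
  let g := fun u : R => chi2_sf (m + h) (theta * chi2_sf_inv m u) in
  (theta <= 1 -> concave_on_01 g) /\
  (1 < theta -> h = 0 -> convex_on_01 g).
Proof.
move=> g; have xi0 (u : R) : 0 < u < 1 -> 0 < chi2_sf_inv m u.
  by move=> u01; have [] := chi2_sf_invP hm u01.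
have hmh : 0 < m + h by rewrite ltr_wpDr.
split=> [th1 | th1 h0].
- apply: (concave_on_01_of_mean_values xi0) => [u1 u2 *|c2 c1 *].
    exact: chi2_sf_inv_mean_value.
  exact: chi2_slope_nondecreasing.
- rewrite /g h0 addr0.
  apply: (convex_on_01_of_mean_values xi0) => [u1 u2 *|c2 c1 *].
    exact: chi2_sf_inv_mean_value.
  exact: chi2_slope_nonincreasing.
Qed.
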